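(* Let $n\geq1$ and $1\leq i<j\leq n$. In $M_n$, the left-lcm of $\rho_i$ and $\rho_j$ exists and equals $(\rho_1\rho_n)^{n-j+1}\rho_i=\rho_{n-j+i+1}(\rho_1\rho_n)^{n-j}\rho_j$.
   Context: $M_n$ denotes the monoid with generators $\rho_1,\dots,\rho_n$ and relations $\rho_1\rho_n\rho_i=\rho_{i+1}\rho_n$ for $1\leq i\leq n-1$. A left-lcm of $a,b$ is a common left-multiple of $a$ and $b$ (an element $xa=yb$) that right-divides every common left-multiple of $a$ and $b$. *)

From Stdlib Require Import Relation_Operators.
From mathcomp Require Import all_boot.
Set Implicit Arguments. Unset Strict Implicit. Unset Printing Implicit Defensive.

(* Words over the generators rho_1, ..., rho_n of M_n: the letter k : nat
   stands for rho_k; a word is valid iff all its letters lie in [1, n]. *)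
Definition word := seq nat.
Definition valid (n : nat) (w : word) : bool := all (fun k => (0 < k <= n)%N) w.

Definition Mstep (n : nat) (u v : word) : Prop :=
  exists (p s : word) (i : nat),
    [/\ (1 <= i)%N, (i <= n - 1)%N,
        u = p ++ [:: 1; n; i] ++ s & v = p ++ [:: i.+1; n] ++ s].

(* The congruence defining M_n: two valid words represent the same element
   of M_n iff they are related by this equivalence closure. *)
Definition Meq (n : nat) : word -> word -> Prop := clos_refl_sym_trans word (Mstep n).

Definition is_left_lcm (n : nat) (a b m : word) : Prop :=
  (exists x y : word, [/\ valid n x, valid n y, Meq n m (x ++ a) & Meq n m (y ++ b)]) /\
  (forall c x' y' : word, valid n c -> valid n x' -> valid n y' ->
     Meq n c (x' ++ a) -> Meq n c (y' ++ b) ->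
     exists z : word, valid n z /\ Meq n c (z ++ m)).

Definition r1n_pow (n k : nat) : word := flatten (nseq k [:: 1; n]).

From Stdlib Require Import Relation_Operators.
From mathcomp Require Import all_boot zify.
Set Implicit Arguments. Unset Strict Implicit. Unset Printing Implicit Defensive.

(* Write t = n-j+1 and s = n-j+i+1 = t+i.  Three identities of M_n drive
   everything: the "block" rule  rho_k rho_n^k rho_m = rho_{k+m} rho_n^k
   (or rho_{k+m-n} rho_n^(k+1) when k+m > n), the centrality of rho_n^(n+1)
   and  (rho_1 rho_n)^k = rho_k rho_n^k.  They give at once both forms
   (rho_1 rho_n)^t rho_i = rho_s rho_n^t = rho_s (rho_1 rho_n)^(n-j) rho_j.

   For the universal property we need an invariant of M_n that remembers
   enough about the last letters of a word.  We build a normal form: a word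
   is read left to right by a deterministic machine whose state is a stack of
   blocks rho_k rho_n^r together with a count q of central factors
   rho_n^(n+1).  The machine is invariant under the defining relation, so it
   is a function on M_n, and every word equals (in M_n) the word read off
   its state.  Right-multiplying by rho_a leaves a top block with a
   recognisable shape ('top_ends'); a state having both shapes for a = i and
   a = j carries at least t letters rho_n on top, and from this shape one
   extracts a right factor rho_s rho_n^t of every common left-multiple. *)

Section LeftLcm.
Variable n : nat.
Hypothesis n_gt1 : 1 < n.

Lemma Mstep_ctx x y u v : Mstep n u v -> Mstep n (x ++ u ++ y) (x ++ v ++ y).
Proof.
case=> p [s] [i] [i_gt0 i_le -> ->]; exists (x ++ p), (s ++ y), i.
by split => //; rewrite -!catA.
Qed.

Lemma Meq_ctx x y u v : Meq n u v -> Meq n (x ++ u ++ y) (x ++ v ++ y).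
Proof.
elim=> [a b /(Mstep_ctx x y) ?|a|a b _ ?|a b c _ IH1 _ IH2].
- exact: rst_step.
- exact: rst_refl.
- exact: rst_sym.
- exact: rst_trans IH2.
Qed.

Lemma Meq_catl x u v : Meq n u v -> Meq n (x ++ u) (x ++ v).
Proof. by move/(Meq_ctx x [::]); rewrite !cats0. Qed.

Lemma Meq_catr y u v : Meq n u v -> Meq n (u ++ y) (v ++ y).
Proof. exact: Meq_ctx [::] y u v. Qed.

Lemma Meq_refl u : Meq n u u. Proof. exact: rst_refl. Qed.
Lemma Meq_sym u v : Meq n u v -> Meq n v u. Proof. exact: rst_sym. Qed.
Lemma Meq_trans u v w : Meq n u v -> Meq n v w -> Meq n u w.
Proof. exact: rst_trans. Qed.

Lemma Mrel i : 0 < i -> i <= n - 1 -> Meq n [:: 1; n; i] [:: i.+1; n].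
Proof. by move=> i_gt0 i_le; apply: rst_step; exists [::], [::], i. Qed.

(* Validity is a property of the element of M_n, since relations only
   involve letters in [1, n]. *)
Lemma Meq_valid u v : Meq n u v -> valid n u = valid n v.
Proof.
elim=> [a b|a|a b _ IH|a b c _ IH1 _ IH2] //; last by rewrite IH1.
case=> p [s] [i] [i_gt0 i_le -> ->]; rewrite /valid !all_cat /= leqnn.
have i_lt : i < n by lia.
by rewrite i_gt0 i_lt (ltnW i_lt) (ltn_trans i_gt0 i_lt).
Qed.

Lemma valid_cat u v : valid n (u ++ v) = valid n u && valid n v.
Proof. exact: all_cat. Qed.

Lemma valid_nseq e : valid n (nseq e n).
Proof. by elim: e => //= e ->; rewrite leqnn andbT; lia. Qed.

Lemma valid1 k : 0 < k <= n -> valid n [:: k].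
Proof. by rewrite /valid /= andbT. Qed.

Lemma valid_block k e : 0 < k <= n -> valid n ([:: k] ++ nseq e n).
Proof. by move=> k_bd; rewrite valid_cat valid1 ?valid_nseq. Qed.

Lemma valid_r1n_pow k : valid n (r1n_pow n k).
Proof. by elim: k => //= k ->; rewrite leqnn !andbT; lia. Qed.

Lemma block_rule k m : 0 < k <= n -> 0 < m < n ->
  Meq n ([:: k] ++ nseq k n ++ [:: m])
        (if k + m <= n then [:: k + m] ++ nseq k n
         else [:: k + m - n] ++ nseq k.+1 n).
Proof.
move=> + /andP[m_gt0 m_lt]; elim: k => // k IH k_bd.
case: (posnP k) => [-> | k_gt0].
  by rewrite /= add1n (_ : m < n) //; apply: Mrel; lia.
have unfold_k : [:: k.+1] ++ nseq k.+1 n ++ [:: m] = [:: k.+1; n] ++ nseq k n ++ [:: m].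
  by [].
rewrite unfold_k; apply: Meq_trans (Meq_catr _ (Meq_sym (Mrel (i := k) _ _))) _; try lia.
apply: Meq_trans (Meq_catl [:: 1; n] (IH ltac:(lia))) _.
case: (ltngtP (k + m) n) => km.
- change (Meq n ([:: 1; n; k + m] ++ nseq k n) ([:: (k + m).+1; n] ++ nseq k n)).
  by apply: Meq_catr; apply: Mrel; lia.
- rewrite (_ : k.+1 + m - n = (k + m - n).+1); last lia.
  change (Meq n ([:: 1; n; k + m - n] ++ nseq k.+1 n) ([:: (k + m - n).+1; n] ++ nseq k.+1 n)).
  by apply: Meq_catr; apply: Mrel; lia.
- by rewrite km (_ : k.+1 + m - n = 1); [exact: Meq_refl | lia].
Qed.

(* rho_n^(n+1) commutes with every generator rho_m, m < n: the block rule
   with k = n reads rho_n^(n+1) rho_m = rho_m rho_n^(n+1). *)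
Lemma central_rho_n q m : 0 < m < n ->
  Meq n (nseq (n.+1 * q) n ++ [:: m]) ([:: m] ++ nseq (n.+1 * q) n).
Proof.
move=> m_bd; elim: q => [|q IH]; first by rewrite muln0; exact: Meq_refl.
rewrite mulnS nseqD -catA; apply: Meq_trans (Meq_catl _ IH) _.
rewrite !catA; apply: Meq_catr.
have := block_rule (k := n) (m := m) ltac:(lia) m_bd.
rewrite (_ : n + m <= n = false); last lia.
by rewrite (_ : n + m - n = m); last lia.
Qed.

Lemma block_rule_central K m N : 0 < K <= n -> 0 < m < n ->
  Meq n ([:: K] ++ nseq (K + n.+1 * N) n ++ [:: m])
    (if K + m <= n then [:: K + m] ++ nseq (K + n.+1 * N) n
     else [:: K + m - n] ++ nseq (K.+1 + n.+1 * N) n).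
Proof.
move=> K_bd m_bd; rewrite (nseqD K) (nseqD K.+1) -!catA.
apply: Meq_trans (Meq_catl _ (Meq_catl _ (central_rho_n N m_bd))) _.
have := block_rule K_bd m_bd; rewrite !catA.
by case: ifP => _ rule; apply: Meq_catr; rewrite -catA.
Qed.

Lemma r1n_pow_block k : 0 < k <= n -> Meq n (r1n_pow n k) ([:: k] ++ nseq k n).
Proof.
elim: k => // k IH k_bd; case: (posnP k) => [-> | k_gt0]; first exact: Meq_refl.
have -> : r1n_pow n k.+1 = [:: 1; n] ++ r1n_pow n k by [].
apply: Meq_trans (Meq_catl _ (IH ltac:(lia))) _.
change (Meq n ([:: 1; n; k] ++ nseq k n) ([:: k.+1; n] ++ nseq k n)).
by apply: Meq_catr; apply: Mrel; lia.
Qed.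

Section TwoForms.
Variables i j : nat.
Hypotheses (i_gt0 : 0 < i) (i_lt_j : i < j) (j_le_n : j <= n).

Lemma lcm_block_form :
  Meq n (r1n_pow n (n - j + 1) ++ [:: i]) ([:: n - j + i + 1] ++ nseq (n - j + 1) n).
Proof.
apply: Meq_trans (Meq_catr _ (r1n_pow_block (k := n - j + 1) ltac:(lia))) _.
have := block_rule (k := n - j + 1) (m := i) ltac:(lia) ltac:(lia).
have -> : n - j + 1 + i <= n by lia.
have -> : n - j + 1 + i = n - j + i + 1 by lia.
by rewrite -catA.
Qed.

Lemma lcm_second_form :
  Meq n ([:: n - j + i + 1] ++ nseq (n - j + 1) n)
        ([:: n - j + i + 1] ++ r1n_pow n (n - j) ++ [:: j]).
Proof.
apply: Meq_catl; case: (j =P n) => [-> | j_ne_n].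
  by rewrite subnn; exact: Meq_refl.
apply: Meq_sym; apply: Meq_trans (Meq_catr _ (r1n_pow_block (k := n - j) ltac:(lia))) _.
have := block_rule (k := n - j) (m := j) ltac:(lia) ltac:(lia).
have -> : n - j + j <= n by lia.
have -> : n - j + j = n by lia.
by rewrite -catA addn1.
Qed.

End TwoForms.

(* A state is a stack of blocks (k, r), standing
   for rho_k rho_n^r (rho_0 is the empty word; only the bottom block has
   k = 0), top first, together with the number q of central factors
   rho_n^(n+1), which are kept at the right end. *)
Definition state := (seq (nat * nat) * nat)%type.

Definition mul_n (S : state) : state :=
  match S with
  | ((k, r) :: rest, q) =>
      if r == n then ((k, 0) :: rest, q.+1) else ((k, r.+1) :: rest, q)
  | _ => S
  end.

(* Right multiplication by rho_m, 0 < m < n: if the top block is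
   rho_k rho_n^k (modulo central factors) the block rule applies, and when
   k + m = n the block collapses to rho_n^(k+1); otherwise rho_m starts a
   new block. *)
Definition mul_lt (m : nat) (S : state) : state :=
  match S with
  | ((k, r) :: rest, q) =>
      if (k != 0) && (r == k) then
        if k + m < n then ((k + m, k) :: rest, q)
        else if n < k + m then ((k + m - n, k.+1) :: rest, q)
        else iter k.+1 mul_n (rest, q)
      else ((m, 0) :: S.1, q)
  | _ => S
  end.

Definition act (S : state) (a : nat) : state :=
  if a == n then mul_n S else if 0 < a < n then mul_lt a S else S.

Definition init : state := ([:: (0, 0)], 0).

Definition nf (w : word) : state := foldl act init w.

Fixpoint wf_lower (B : seq (nat * nat)) : bool :=
  match B with
  | [::] => false
  | (k, r) :: rest =>
     if rest is [::] then (k == 0) && (r <= n)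
     else [&& 0 < k < n, r <= n, r != k & wf_lower rest]
  end.

Definition wf (S : state) : bool :=
  match S.1 with
  | [::] => false
  | (k, r) :: rest =>
     if rest is [::] then (k == 0) && (r <= n)
     else [&& 0 < k < n, r <= n & wf_lower rest]
  end.

Lemma wf_lower_wf B q : wf_lower B -> wf (B, q).
Proof.
by case: B => // [[k r] [|b rest]] //=; rewrite /wf /=; case/and4P => -> -> _ ->.
Qed.

Lemma wf_top k r rest q : wf ((k, r) :: rest, q) -> k < n /\ r <= n.
Proof.
rewrite /wf /=; case: rest => [|b rest] /=.
  by case/andP => /eqP -> ?; split; lia.
by case/and3P => /andP[_ ?] ? _.
Qed.

Lemma wf_mul_n S : wf S -> wf (mul_n S).
Proof.
case: S => [[|[k r] [|b rest]] q] //; rewrite /wf /=.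
  by case/andP=> /eqP -> r_le; case: eqP => //= r_ne; lia.
by case/and3P => k_bd r_le lower; case: eqP => //= r_ne; rewrite k_bd lower ?andbT; lia.
Qed.

Lemma wf_iter_mul_n e S : wf S -> wf (iter e mul_n S).
Proof. by elim: e => //= e IH /IH /wf_mul_n. Qed.

Lemma wf_act S a : wf S -> 0 < a <= n -> wf (act S a).
Proof.
move=> wfS a_bd; rewrite /act; case: eqP => [_ | a_ne]; first exact: wf_mul_n.
rewrite (_ : 0 < a < n); last lia.
move: wfS; case: S => [[|[k r] rest] q] //=.
case: rest => [|[k' r'] rest] /=.
  by rewrite /wf /= => /andP[/eqP -> r_le] /=; apply/andP; split; lia.
rewrite /wf /= => /and3P[k_bd r_le lower].
case: ifP => [/andP[/eqP k_ne /eqP r_eq] | irred].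
  case: ifP => [lt | _]; first by rewrite /wf /= lower andbT; apply/andP; split; lia.
  case: ifP => [gt | _]; first by rewrite /wf /= lower andbT; apply/andP; split; lia.
  by apply: (wf_iter_mul_n k.+1); exact: (wf_lower_wf (B := (k', r') :: rest)).
rewrite /wf /= k_bd r_le lower !andbT; apply/andP; split; lia.
Qed.

Lemma wf_nf w : valid n w -> wf (nf w).
Proof.
rewrite /nf; have : wf init by [].
elim: w init => //= a w IH S wfS /andP[a_bd valid_w].
exact/IH/valid_w/wf_act.
Qed.

Lemma nf_cat u v : nf (u ++ v) = foldl act (nf u) v.
Proof. by rewrite /nf foldl_cat. Qed.

Lemma iter_mul_n e k r rest q : r <= n -> e <= n.+1 ->
  iter e mul_n ((k, r) :: rest, q) =
  if r + e <= n then ((k, r + e) :: rest, q) else ((k, r + e - n.+1) :: rest, q.+1).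
Proof.
move=> r_le; elim: e => [|e IH] e_le; first by rewrite addn0 r_le.
rewrite iterS IH; last lia.
case: (leqP (r + e) n) => re /=; case: eqP => re_n.
- have -> : (r + e.+1 <= n) = false by lia.
  by have -> : r + e.+1 - n.+1 = 0 by lia.
- by rewrite (_ : r + e.+1 <= n) ?addnS //; lia.
- lia.
- have -> : (r + e.+1 <= n) = false by lia.
  by have -> : r + e.+1 - n.+1 = (r + e - n.+1).+1 by lia.
Qed.

Ltac case_ifs := repeat (case: ifP => /=; [move=> ? | move/negbT => ?]).

Lemma act_rel S i : wf S -> 0 < i < n ->
  act (act (act S 1) n) i = act (act S i.+1) n.
Proof.
move=> wfS i_bd.
have one_ne : (1 == n) = false by apply/eqP; lia.
have i_ne : (i == n) = false by apply/eqP; lia.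
have one_lt : 0 < 1 < n by lia.
rewrite /act one_ne i_ne eqxx i_bd one_lt.
case: S wfS => [[|[k r] rest] q] // wfS; rewrite /mul_lt /=.
have [k_lt r_le] := wf_top wfS.
case: ifP => [/andP[/eqP k_ne /eqP r_eq] | /negbT irred].
  subst r; move: wfS; rewrite /wf /=.
  case: rest => [|[k' r'] rest'] /=; first by case/andP => /eqP.
  move=> /and3P[_ _ lower].
  have r'_le : r' <= n.
    by case: rest' lower => [|b rest'] /=; [case/andP | case/and4P]; lia.
  have irred' : ~~ ((k' != 0) && (r' == k')).
    case: rest' lower => [|b rest'] /=; first by case/andP => /eqP ->.
    by case/and4P => _ _ /negbTE -> _; rewrite andbF.
  do 3 (case_ifs; rewrite ?iter_mul_n //=; try lia).
  all: try (exfalso; lia); try (by first [congr ((_, _) :: (_, _) :: _, _) | congr ((_, _) :: _, _)]; lia).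
do 3 (case_ifs; rewrite ?iter_mul_n //=; try lia).
all: try (exfalso; lia); try (by first [congr ((_, _) :: (_, _) :: _, _) | congr ((_, _) :: _, _)]; lia).
Qed.

Lemma nf_Mstep u v : Mstep n u v -> valid n u -> nf u = nf v.
Proof.
case=> p [s] [i] [i_gt0 i_le -> ->]; rewrite valid_cat => /andP[valid_p _].
by rewrite !nf_cat /=; congr foldl; apply: act_rel (wf_nf valid_p) _; lia.
Qed.

Lemma nf_Meq u v : Meq n u v -> valid n u -> nf u = nf v.
Proof.
elim=> [a b|a|a b ab IH|a b c ab IH1 _ IH2] valid_a //; first exact: nf_Mstep.
- by rewrite IH // (Meq_valid ab).
- by rewrite IH1 // IH2 // -(Meq_valid ab).
Qed.

(* Reading back a word from a state: the lower blocks bottom-up, then the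
   top block with all central factors rho_n^(n+1) merged into its
   exponent 'top_exp'. *)
Definition hdw (k : nat) : word := if k == 0 then [::] else [:: k].
Lemma hdw_pos k : 0 < k -> hdw k = [:: k].
Proof. by rewrite /hdw; case: eqP => // ->. Qed.

Definition block_word (b : nat * nat) : word := hdw b.1 ++ nseq b.2 n.
Definition top (S : state) : nat * nat := head (0, 0) S.1.
Definition top_exp (S : state) : nat := (top S).2 + n.+1 * S.2.
Definition word_of (S : state) : word :=
  flatten (map block_word (rev (behead S.1))) ++ hdw (top S).1 ++ nseq (top_exp S) n.

Lemma word_of_cons k r rest q : word_of ((k, r) :: rest, q) =
  flatten (map block_word (rev rest)) ++ hdw k ++ nseq (r + n.+1 * q) n.
Proof. by []. Qed.

Lemma mul_n_nonempty S : S.1 != [::] -> (mul_n S).1 != [::].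
Proof. by case: S => [[|[k r] rest] q] // _ /=; case: (r == n). Qed.

Lemma iter_mul_n_nonempty e S : S.1 != [::] -> (iter e mul_n S).1 != [::].
Proof. by elim: e => //= e IH /IH /mul_n_nonempty. Qed.

Lemma top_exp_mul_n S : S.1 != [::] -> top_exp (mul_n S) = (top_exp S).+1.
Proof.
by case: S => [[|[k r] rest] q] // _; rewrite /top_exp /=; case: eqP => [->|_] /=;
  rewrite ?mulnS; lia.
Qed.

Lemma top_exp_iter_mul_n e S : S.1 != [::] -> top_exp (iter e mul_n S) = top_exp S + e.
Proof.
move=> ne; elim: e => [|e IH]; first by rewrite addn0.
by rewrite iterS top_exp_mul_n ?IH ?addnS // iter_mul_n_nonempty.
Qed.

Lemma word_of_mul_n S : S.1 != [::] -> word_of (mul_n S) = word_of S ++ [:: n].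
Proof.
move=> ne; have := top_exp_mul_n ne; case: S ne => [[|[k r] rest] q] // _.
rewrite /word_of -!catA -(nseqD _ 1) addn1 => <- /=.
by case: (r == n).
Qed.

Lemma word_of_iter_mul_n e S : S.1 != [::] ->
  word_of (iter e mul_n S) = word_of S ++ nseq e n.
Proof.
move=> ne; elim: e => [|e IH]; first by rewrite cats0.
by rewrite iterS word_of_mul_n ?IH -?catA -?(nseqD _ 1) ?addn1 // iter_mul_n_nonempty.
Qed.

Lemma word_of_act S a : wf S -> 0 < a <= n ->
  Meq n (word_of S ++ [:: a]) (word_of (act S a)).
Proof.
move=> wfS a_bd; rewrite /act; case: eqP => [-> | a_ne].
  rewrite word_of_mul_n; first exact: Meq_refl.
  by case: S wfS => [[|b rest] q].
have a_lt : 0 < a < n by lia.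
rewrite a_lt; case: S wfS => [[|[k r] rest] q] // wfS.
have [k_lt r_le] := wf_top wfS.
rewrite /mul_lt; case: ifP => [/andP[/eqP k_ne /eqP r_eq] | _].
  subst r; have rule := block_rule_central q (K := k) ltac:(lia) a_lt.
  rewrite word_of_cons hdw_pos -?catA; last lia.
  case: ifP => [lt | not_lt].
    rewrite (_ : k + a <= n) in rule; last lia.
    by rewrite word_of_cons hdw_pos; [apply: Meq_catl | lia].
  case: ifP => [gt | not_gt].
    rewrite (_ : (k + a <= n) = false) in rule; last lia.
    by rewrite word_of_cons hdw_pos; [apply: Meq_catl | lia].
  rewrite (_ : k + a <= n) in rule; last lia.
  rewrite (_ : k + a = n) in rule; last lia.
  case: rest wfS => [|[k' r'] rest'] wfS.
    by move: wfS; rewrite /wf /=; case/andP => /eqP.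
  rewrite word_of_iter_mul_n // word_of_cons rev_cons map_rcons flatten_rcons -!catA.
  apply: Meq_catl; rewrite /block_word /= -?catA; apply: Meq_catl.
  apply: Meq_trans (Meq_catl _ rule) _.
  rewrite -(nseqD 1) -[n :: nseq k n]/(nseq k.+1 n) -!nseqD.
  by rewrite (_ : r' + (1 + (k + n.+1 * q)) = r' + n.+1 * q + k.+1); [exact: Meq_refl | lia].
rewrite /word_of /top_exp /= rev_cons map_rcons flatten_rcons /block_word /= -!catA.
apply: Meq_catl; apply: Meq_catl; rewrite nseqD -catA; apply: Meq_catl.
rewrite /hdw (_ : (a == 0) = false) ?add0n; last by apply/eqP; lia.
exact: central_rho_n.
Qed.

Lemma word_of_foldl S w : wf S -> valid n w ->
  Meq n (word_of S ++ w) (word_of (foldl act S w)).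
Proof.
elim: w S => [|a w IH] S wfS /=; first by rewrite cats0 => _; exact: Meq_refl.
case/andP => a_bd valid_w; rewrite -cat1s catA.
apply: Meq_trans (Meq_catr _ (word_of_act wfS a_bd)) _.
exact/IH/valid_w/wf_act.
Qed.

Lemma word_of_nf w : valid n w -> Meq n w (word_of (nf w)).
Proof.
move=> valid_w; have := word_of_foldl (S := init) isT valid_w.
by rewrite /word_of /top_exp /= muln0.
Qed.

(* The shape left on top of a state by a final letter rho_a: either the
   top block rho_k rho_n^r (k > 0) has k = r + a modulo n+1, or at least
   n-a+1 letters rho_n sit on top. *)
Definition top_ends (S : state) (a : nat) : Prop :=
  let: (k, r) := top S in
  (k != 0 /\ (k = r + a \/ k + n.+1 = r + a)) \/ n - a + 1 <= top_exp S.

Lemma top_ends_act S a : wf S -> 0 < a <= n -> top_ends (act S a) a.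
Proof.
move=> wfS a_bd; rewrite /top_ends; case: (a =P n) => [a_eq | a_ne].
  rewrite /act a_eq eqxx top_exp_mul_n; last by case: S wfS => [[|b rest] q].
  by case: (top _) => k r; right; lia.
have a_lt : 0 < a < n by lia.
rewrite /act (_ : (a == n) = false) ?a_lt; last exact/eqP.
case: S wfS => [[|[k r] rest] q] // wfS; have [k_lt _] := wf_top wfS.
rewrite /mul_lt; case: ifP => [/andP[/eqP k_ne /eqP r_eq] | _]; last by left; split; lia.
subst r; case: ifP => [lt | not_lt]; first by left; split; [apply/eqP | left]; lia.
case: ifP => [gt | not_gt]; first by left; split; [apply/eqP | right]; lia.
case: rest wfS => [|[k' r'] rest'] wfS; first by move: wfS; rewrite /wf /=; case/andP => /eqP.
case: (top _) => k'' r''; right.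
by rewrite top_exp_iter_mul_n // /top_exp /=; lia.
Qed.

Lemma top_ends_both S i j : 0 < i -> i < j -> j <= n ->
  top_ends S i -> top_ends S j -> n - j + 1 <= top_exp S.
Proof. by rewrite /top_ends; case: (top S) => k r; lia. Qed.

Definition rdivisible (w : word) (a : nat) : Prop :=
  exists2 z, valid n z & Meq n w (z ++ [:: a]).

Lemma rdivisible_catl u w a : valid n u -> rdivisible w a -> rdivisible (u ++ w) a.
Proof.
move=> valid_u [z valid_z wz]; exists (u ++ z); first by rewrite valid_cat valid_u.
by rewrite -catA; apply: Meq_catl.
Qed.

(* rho_n^e is right-divisible by rho_s as soon as e > n - s, since
   rho_n^(n-s+1) = rho_{n-s} rho_n^(n-s) rho_s by the block rule. *)
Lemma rdivisible_rho_n_pow e s : 0 < s <= n -> n - s < e -> rdivisible (nseq e n) s.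
Proof.
move=> s_bd e_gt; case: (s =P n) => [-> | s_ne].
  exists (nseq e.-1 n); first exact: valid_nseq.
  by rewrite -(nseqD _ 1) addn1 prednK; [exact: Meq_refl | lia].
rewrite (_ : e = e - (n - s).+1 + (n - s).+1) ?nseqD; last lia.
apply: rdivisible_catl; first exact: valid_nseq.
exists ([:: n - s] ++ nseq (n - s) n); first by apply: valid_block; lia.
have := block_rule (k := n - s) (m := s) ltac:(lia) ltac:(lia).
have -> : n - s + s <= n by lia.
have -> : n - s + s = n by lia.
by rewrite -catA; move/Meq_sym.
Qed.

Lemma rdivisible_central w s q : 0 < s < n ->
  rdivisible w s -> rdivisible (w ++ nseq (n.+1 * q) n) s.
Proof.
move=> s_bd [z valid_z wz]; exists (z ++ nseq (n.+1 * q) n).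
  by rewrite valid_cat valid_z valid_nseq.
apply: Meq_trans (Meq_catr _ wz) _; rewrite -!catA; apply: Meq_catl.
exact: Meq_sym (central_rho_n q s_bd).
Qed.

Lemma rdivisible_block K s r q : 0 < K < n -> 0 < s <= n -> r <= n ->
  (K = r + s \/ K + n.+1 = r + s) -> rdivisible ([:: K] ++ nseq (r + n.+1 * q) n) s.
Proof.
move=> K_bd s_bd r_le shape; case: (s =P n) => [s_eq | s_ne].
  exists ([:: K] ++ nseq (K + n.+1 * q) n).
    by apply: valid_block; lia.
  rewrite s_eq (_ : r = K.+1); last lia.
  by rewrite -catA -(nseqD _ 1) addn1 addSn; exact: Meq_refl.
have s_lt : 0 < s < n by lia.
rewrite nseqD catA; apply: rdivisible_central => //.
case: shape => [K_eq | K_eq].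
  case: (posnP r) => [r0 | r_gt0].
    by exists [::]; rewrite // K_eq r0; exact: Meq_refl.
  exists ([:: r] ++ nseq r n); first by apply: valid_block; lia.
  have := block_rule (k := r) (m := s) ltac:(lia) s_lt.
  by rewrite (_ : r + s <= n) -?K_eq -?catA; [move/Meq_sym | lia].
exists ([:: r.-1] ++ nseq r.-1 n); first by apply: valid_block; lia.
have := block_rule (k := r.-1) (m := s) ltac:(lia) s_lt.
have -> : (r.-1 + s <= n) = false by lia.
have -> : r.-1 + s - n = K by lia.
by rewrite prednK -?catA; [move/Meq_sym | lia].
Qed.

Lemma rdivisible_top S a t : wf S -> 0 < a -> t + a <= n -> t <= top_exp S ->
  top_ends S a -> rdivisible (hdw (top S).1 ++ nseq (top_exp S - t) n) (t + a).
Proof.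
case: S => [[|[K r] rest] q] // wfS a_gt0 ta_le t_le.
have [K_lt r_le] := wf_top wfS; rewrite /top_ends /top_exp /= in t_le *.
case=> [[K_ne shape] | many].
  rewrite /hdw (negbTE K_ne).
  have [r_ge | r_lt] := leqP t r.
    rewrite (_ : r + n.+1 * q - t = r - t + n.+1 * q); last lia.
    apply: rdivisible_block; lia.
  have q_gt0 : 0 < q by rewrite lt0n; apply/eqP => q0; move: t_le; rewrite q0 muln0; lia.
  rewrite (_ : r + n.+1 * q - t = r + n.+1 - t + n.+1 * q.-1); last first.
    by rewrite -{1}(prednK q_gt0) mulnS; lia.
  apply: rdivisible_block; lia.
apply: rdivisible_catl; first by rewrite /hdw; case: eqP => // K_ne; apply: valid1; lia.
apply: rdivisible_rho_n_pow; lia.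
Qed.

Lemma common_multiple_divisible c x y i j : 0 < i -> i < j -> j <= n ->
  valid n c -> valid n x -> valid n y ->
  Meq n c (x ++ [:: i]) -> Meq n c (y ++ [:: j]) ->
  exists z, valid n z /\ Meq n c (z ++ r1n_pow n (n - j + 1) ++ [:: i]).
Proof.
move=> i_gt0 i_lt j_le valid_c valid_x valid_y cx cy.
set t := n - j + 1; set S := nf c.
have ends_i : top_ends S i.
  by rewrite /S (nf_Meq cx) // nf_cat; apply: top_ends_act (wf_nf valid_x) _; lia.
have ends_j : top_ends S j.
  by rewrite /S (nf_Meq cy) // nf_cat; apply: top_ends_act (wf_nf valid_y) _; lia.
have t_le := top_ends_both i_gt0 i_lt j_le ends_i ends_j.
have ti_le : t + i <= n by rewrite /t; lia.
have [z1 valid_z1 z1_eq] := rdivisible_top (wf_nf valid_c) i_gt0 ti_le t_le ends_i.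
have c_nf := word_of_nf valid_c; rewrite -/S /word_of in c_nf.
set P := flatten _ in c_nf.
have valid_P : valid n P.
  by move: (Meq_valid c_nf); rewrite valid_c valid_cat => /esym/andP[].
exists (P ++ z1); split; first by rewrite valid_cat valid_P.
apply: Meq_trans c_nf _; rewrite -!catA; apply: Meq_catl.
rewrite -{1}(subnK t_le) nseqD catA.
apply: Meq_trans (Meq_catr _ z1_eq) _; rewrite -catA; apply: Meq_catl.
rewrite (_ : t + i = n - j + i + 1); last by rewrite /t; lia.
exact: Meq_sym (lcm_block_form i_gt0 i_lt j_le).
Qed.

End LeftLcm.

Theorem corollary4p13 (n i j : nat) :
  (1 <= n)%N -> (1 <= i)%N -> (i < j)%N -> (j <= n)%N ->
  is_left_lcm n [:: i] [:: j] (r1n_pow n (n - j + 1) ++ [:: i]) /\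
  Meq n (r1n_pow n (n - j + 1) ++ [:: i])
        ([:: n - j + i + 1] ++ r1n_pow n (n - j) ++ [:: j]).
Proof.
move=> _ i_gt0 i_lt j_le; have n_gt1 : 1 < n by lia.
have two_forms := Meq_trans (lcm_block_form n_gt1 i_gt0 i_lt j_le)
                            (lcm_second_form n_gt1 i_gt0 i_lt j_le).
split=> //; split.
  exists (r1n_pow n (n - j + 1)), ([:: n - j + i + 1] ++ r1n_pow n (n - j)).
  split; [exact: valid_r1n_pow | | exact: Meq_refl | by rewrite -catA].
  by rewrite valid_cat (valid_r1n_pow n_gt1) valid1 //; lia.
move=> c x y valid_c valid_x valid_y cx cy.
exact: (common_multiple_divisible n_gt1 i_gt0 i_lt j_le valid_c valid_x valid_y cx cy).
Qed.
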